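(* Let $A$ be a meet-semilattice and $\kappa$ a regular cardinal. The following are equivalent: (1) every $\kappa$-join in $\mathcal{DM} A$ is distributive; (2) $\mathcal{DM} A$ is a $\kappa$-frame; (3) $\mathcal{BL}_\kappa(\mathcal{DM} A)=\mathcal{DM} A$.
   Context: A meet-semilattice is a poset with all finite meets. $\mathcal{DM} A$ is the complete lattice of normal ideals of $A$ (downsets $N$ with $N=N^{u\ell}$, where ${}^u,{}^\ell$ denote upper and lower bounds). An existing join $\bigvee S$ is distributive if $a\wedge\bigvee S=\bigvee\{a\wedge s:s\in S\}$ for all $a$. A D-ideal is a downset containing $\bigvee S$ for each subset $S$ of it with distributive join; $\mathcal{BL} A$ is the frame of D-ideals, and every normal ideal is a D-ideal, so $\mathcal{DM} A\subseteq\mathcal{BL} A$ (with $\mathcal{BL}(\mathcal{DM} A)$ identified with $\mathcal{BL} A$). A $\kappa$-join is a join of fewer than $\kappa$ elements; a $\kappa$-frame is a meet-semilattice in which all $\kappa$-joins exist and are distributive. $\mathcal{BL}_\kappa(\mathcal{DM} A)$ denotes the sub-$\kappa$-frame of $\mathcal{BL} A$ generated by $\mathcal{DM} A$ (closure of $\mathcal{DM} A$ under finite meets and $\kappa$-joins computed in $\mathcal{BL} A$). *)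

From mathcomp Require Import all_boot all_order.
Set Implicit Arguments. Unset Strict Implicit. Unset Printing Implicit Defensive.
Import Order.Theory.

Definition card_lt (X K : Type) : Prop :=
  (exists f : X -> K, injective f) /\ ~ (exists g : K -> X, injective g).

(* a subset S of X has fewer than kappa = |K| elements *)
Definition lt_kappa (K : Type) (X : Type) (S : X -> Prop) : Prop :=
  card_lt {x : X | S x} K.

(* kappa = |K| is a regular (infinite) cardinal: not a sum of fewer than
   kappa cardinals each smaller than kappa *)
Definition regular_cardinal (K : Type) : Prop :=
  (exists f : nat -> K, injective f) /\
  forall (I : Type) (F : I -> Type),
    card_lt I K -> (forall i, card_lt (F i) K) -> card_lt {i : I & F i} K.

Section Generic.
Variables (X : Type) (D : X -> Prop) (le : X -> X -> Prop).

Definition is_lub (S : X -> Prop) (x : X) : Prop :=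
  D x /\ (forall s, S s -> le s x) /\
  (forall y, D y -> (forall s, S s -> le s y) -> le x y).

Definition is_glb (S : X -> Prop) (x : X) : Prop :=
  D x /\ (forall s, S s -> le x s) /\
  (forall y, D y -> (forall s, S s -> le y s) -> le y x).

Definition is_meet (a b m : X) : Prop := is_glb (fun z => z = a \/ z = b) m.

Definition dist_join (S : X -> Prop) (j : X) : Prop :=
  is_lub S j /\
  forall a m, D a -> is_meet a j m ->
    is_lub (fun z => exists2 s, S s & is_meet a s z) m.

Definition kappa_frame (K : Type) : Prop :=
  (exists t, is_glb (fun _ => False) t) /\
  (forall a b, D a -> D b -> exists m, is_meet a b m) /\
  (forall S, (forall s, S s -> D s) -> lt_kappa K S -> exists j, dist_join S j).

End Generic.

Section Ideals.
Context {d : Order.disp_t} {A : tMeetSemilatticeType d}.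

Definition leA (x y : A) : Prop := (x <= y)%O.
Definition fullA (_ : A) : Prop := True.

Definition subsetA (N M : A -> Prop) : Prop := forall x, N x -> M x.

Definition ubs (N : A -> Prop) : A -> Prop := fun x => forall y, N y -> (y <= x)%O.
Definition lbs (N : A -> Prop) : A -> Prop := fun x => forall y, N y -> (x <= y)%O.

Definition downset (N : A -> Prop) : Prop := forall x y, (x <= y)%O -> N y -> N x.

(* normal ideals: N = N^{ul};  DM A *)
Definition normal_ideal (N : A -> Prop) : Prop :=
  downset N /\ forall x, N x <-> lbs (ubs N) x.

(* D-ideals; BL A *)
Definition D_ideal (I : A -> Prop) : Prop :=
  downset I /\
  forall (S : A -> Prop) (j : A), (forall s, S s -> I s) ->
    dist_join fullA leA S j -> I j.

Definition sub_kappa_frame_BL (K : Type) (C : (A -> Prop) -> Prop) : Prop :=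
  (forall N, C N -> D_ideal N) /\
  (forall t, is_glb D_ideal subsetA (fun _ => False) t -> C t) /\
  (forall a b m, C a -> C b -> is_meet D_ideal subsetA a b m -> C m) /\
  (forall S, (forall s, S s -> C s) -> lt_kappa K S ->
     forall j, is_lub D_ideal subsetA S j -> C j).

Definition BL_kappa_DM (K : Type) (N : A -> Prop) : Prop :=
  forall C, sub_kappa_frame_BL K C -> (forall M, normal_ideal M -> C M) -> C N.

End Ideals.

(* Both directions rest on comparing joins in DM A with joins in BL A.
   If a join J of normal ideals is distributive in DM A, then every x in J is
   the distributive join in A of the elements of the union lying below x, so J
   is contained in every D-ideal containing the family: J is also its join in
   BL A, and DM A is closed under the kappa-joins of BL A.  Conversely, if the
   BL-join of a family of normal ideals is normal, it is the DM-join, and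
   distributivity follows because, for a fixed normal ideal a and normal ideal
   Y, the residual { x | a /\ x <= Y } is a D-ideal. *)
From mathcomp Require Import all_boot all_order.
Set Implicit Arguments. Unset Strict Implicit.
Import Order.Theory.
Local Open Scope order_scope.

Section LeastUpperBounds.
Variables (X : Type) (D : X -> Prop) (le : X -> X -> Prop).

Lemma is_lub_ext (P Q : X -> Prop) j :
  (forall z, P z <-> Q z) -> is_lub D le P j -> is_lub D le Q j.
Proof.
move=> PQ [Dj [ubj lej]]; split=> //; split.
- by move=> s /PQ; apply: ubj.
- by move=> y Dy uby; apply: lej => // s /PQ; apply: uby.
Qed.

Hypothesis le_trans : forall x y z, le x y -> le y z -> le x z.

Lemma dist_join_lub (S : X -> Prop) j j' :
  dist_join D le S j' -> is_lub D le S j -> dist_join D le S j.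
Proof.
move=> [[Dj' [ubj' lej']] distj'] [Dj [ubj lej]].
have jj' := lej _ Dj' ubj'; have j'j := lej' _ Dj ubj.
split=> // a m Da [Dm [lbm glbm]]; apply: distj' => //.
split=> //; split.
- move=> z [->|->]; first exact: lbm _ (or_introl erefl).
  exact: le_trans (lbm j (or_intror erefl)) jj'.
- move=> y Dy lby; apply: glbm => // z [->|->]; first exact: lby _ (or_introl erefl).
  exact: le_trans (lby j' (or_intror erefl)) j'j.
Qed.

End LeastUpperBounds.

Section DedekindMacNeille.
Context {d : Order.disp_t} {A : tMeetSemilatticeType d}.
Implicit Types (a x y z : A) (N M I Y : A -> Prop) (S : (A -> Prop) -> Prop).

Definition meet_image (a : A) (T : A -> Prop) : A -> Prop :=
  fun z => exists2 t, T t & z = a `&` t.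

Definition union S : A -> Prop := fun x => exists2 s, S s & s x.

Definition below_union S z : A -> Prop := fun y => y <= z /\ union S y.

Definition BL_join S : A -> Prop :=
  fun x => forall I, D_ideal I -> (forall s, S s -> subsetA s I) -> I x.

Definition DM_dist_kappa_joins (K : Type) : Prop :=
  forall S : (A -> Prop) -> Prop,
    (forall s, S s -> normal_ideal s) -> lt_kappa K S ->
    forall j, is_lub normal_ideal subsetA S j -> dist_join normal_ideal subsetA S j.

Lemma is_meetA a b m : is_meet fullA leA a b m <-> m = a `&` b.
Proof.
split.
- move=> [_ [lbm glbm]]; apply/le_anti/andP; split.
  + by rewrite lexI (lbm a (or_introl erefl)) (lbm b (or_intror erefl)).
  + by apply: glbm => // z [->|->]; [exact: leIl | exact: leIr].
- move=> ->; split=> //; split.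
  + by move=> z [->|->]; [exact: leIl | exact: leIr].
  + move=> y _ lby; rewrite /leA lexI.
    by rewrite (lby a (or_introl erefl)) (lby b (or_intror erefl)).
Qed.

Lemma dist_joinA (T : A -> Prop) t :
  dist_join fullA leA T t <->
  is_lub fullA leA T t /\
  forall a, is_lub fullA leA (meet_image a T) (a `&` t).
Proof.
split=> [[lubt distt] | [lubt distt]]; split=> // a.
- apply: is_lub_ext (distt a _ I (proj2 (is_meetA _ _ _) erefl)) => z.
  split=> -[s Ts zE]; exists s => //; exact/is_meetA.
- move=> m _ /is_meetA ->; apply: is_lub_ext (distt a) => z.
  split=> -[s Ts zE]; exists s => //; exact/is_meetA.
Qed.

Lemma dist_join_meetl (T : A -> Prop) t y :
  dist_join fullA leA T t ->
  dist_join fullA leA (meet_image y T) (y `&` t).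
Proof.
move=> /dist_joinA [_ distt]; apply/dist_joinA; split; first exact: distt.
move=> b; rewrite meetA; apply: is_lub_ext (distt (b `&` y)) => z; split.
- by move=> [s Ts ->]; exists (y `&` s); [exists s | rewrite meetA].
- by move=> [_ [s Ts ->] ->]; exists s; rewrite ?meetA.
Qed.

Lemma sub_lbs_ubs N x : N x -> lbs (ubs N) x.
Proof. by move=> Nx u; apply. Qed.

Lemma normal_lbs_ubs N : normal_ideal (lbs (ubs N)).
Proof.
split=> [x y xy Ly u ubu | x]; first exact: le_trans xy (Ly u ubu).
split=> [Lx u ubu | LLx u ubu]; first exact: ubu.
by apply: LLx => y Ly; apply: Ly.
Qed.

Lemma normal_ideal_ext N M :
  normal_ideal N -> (forall x, N x <-> M x) -> normal_ideal M.
Proof.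
move=> [downN ulN] NM; split=> [x y xy /NM My | x]; first exact/NM/(downN x y).
split=> [/NM /ulN Nx u ubu | Lx].
- by apply: Nx => y /NM; apply: ubu.
- by apply/NM/ulN => u ubu; apply: Lx => y /NM; apply: ubu.
Qed.

Lemma normal_principal z : normal_ideal (fun x => x <= z).
Proof.
split=> [x y xy yz | x]; first exact: le_trans xy yz.
split=> [xz u ubu | Lx]; first exact: le_trans xz (ubu z (lexx z)).
exact: Lx.
Qed.

Lemma normal_setI N M :
  normal_ideal N -> normal_ideal M -> normal_ideal (fun x => N x /\ M x).
Proof.
move=> [downN ulN] [downM ulM]; split=> [x y xy [Ny My] | x].
  by split; [exact: downN xy Ny | exact: downM xy My].
split=> [|Lx]; first exact: sub_lbs_ubs.
split; [apply/ulN | apply/ulM] => u ubu; apply: Lx => y [Ny My]; exact: ubu.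
Qed.

Lemma normal_setT : normal_ideal (fun _ : A => True).
Proof. by split=> // x; split=> // _ u; apply. Qed.

Lemma normal_D_ideal N : normal_ideal N -> D_ideal N.
Proof.
move=> [downN ulN]; split=> // T j TN [[_ [_ lej]] _].
by apply/ulN => u ubu; apply: lej => // s /TN; apply: ubu.
Qed.

Lemma DM_top :
  is_glb normal_ideal subsetA (fun _ => False) (fun _ : A => True).
Proof. by split; [exact: normal_setT | split]. Qed.

Lemma DM_meet N M : normal_ideal N -> normal_ideal M ->
  is_meet normal_ideal subsetA N M (fun x => N x /\ M x).
Proof.
move=> nN nM; split; first exact: normal_setI.
split=> [z [->|->] x [] // | Y _ lbY x Yx].
by split; [exact: lbY _ (or_introl erefl) x Yx | exact: lbY _ (or_intror erefl) x Yx].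
Qed.

Lemma DM_lub S : (forall s, S s -> normal_ideal s) ->
  is_lub normal_ideal subsetA S (lbs (ubs (union S))).
Proof.
move=> nS; split; first exact: normal_lbs_ubs.
split=> [s Ss x sx | Y [_ ulY] ubY x Lx]; first by apply: sub_lbs_ubs; exists s.
by apply/ulY => u ubu; apply: Lx => w [s Ss sw]; apply: ubu (ubY s Ss w sw).
Qed.

Lemma D_ideal_BL_join S : D_ideal (BL_join S).
Proof.
split=> [x y xy Jy I DI SI | T t TJ distt I DI SI]; first exact: DI.1 xy (Jy I DI SI).
by apply: DI.2 distt => s Ts; apply: TJ.
Qed.

Lemma BL_join_lub S : is_lub D_ideal subsetA S (BL_join S).
Proof.
split; first exact: D_ideal_BL_join.
by split=> [s Ss x sx I _ SI | Y DY SY x Jx]; [apply: SI s Ss x sx | apply: Jx].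
Qed.

Lemma D_ideal_residual (a : A -> Prop) Y :
  D_ideal Y -> D_ideal (fun x => forall y, a y -> Y (y `&` x)).
Proof.
move=> [downY distY]; split=> [x x' xx' Rx' y ay | T t TR distt y ay].
  by apply: downY (Rx' y ay); rewrite leI2.
apply: (distY (meet_image y T)); last exact: dist_join_meetl.
by move=> _ [s Ts ->]; apply: TR.
Qed.

Section DistributiveDMJoin.
Variables (S : (A -> Prop) -> Prop) (J : A -> Prop).
Hypothesis distJ : dist_join normal_ideal subsetA S J.

Lemma dist_DM_join_lub_below z : J z -> is_lub fullA leA (below_union S z) z.
Proof.
move=> Jz; have [[[downJ _] _] distJz] := distJ.
split=> //; split=> [y [] // | u _ ubu].
have meet_z : is_meet normal_ideal subsetA (fun x => x <= z) J (fun x => x <= z).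
  split; first exact: normal_principal.
  split=> [w [->|->] x // xz | y _ lby]; first exact: downJ xz Jz.
  exact: lby _ (or_introl erefl).
have [_ [_ lez]] := distJz _ _ (normal_principal z) meet_z.
suff: lbs (ubs (below_union S z)) z by apply.
apply: lez (lexx z); first exact: normal_lbs_ubs.
move=> Z [s Ss [_ [lbZ _]]] w Zw; apply: sub_lbs_ubs.
split; first exact: lbZ _ (or_introl erefl) w Zw.
by exists s; last exact: lbZ _ (or_intror erefl) w Zw.
Qed.

Lemma dist_DM_join_dist_below x : J x -> dist_join fullA leA (below_union S x) x.
Proof.
move=> Jx; have [[[downJ _] _] _] := distJ.
apply/dist_joinA; split=> [|a]; first exact: dist_DM_join_lub_below.
split=> //; split=> [_ [y [yx _] ->] | u _ ubu].
  by rewrite /leA leI2.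
have [_ [_ leax]] := dist_DM_join_lub_below (downJ _ x (leIr x a) Jx).
apply: leax => // y [yax Uy].
apply: ubu; exists y; first by split=> //; exact: le_trans yax (leIr x a).
by apply/esym/meet_idPr; exact: le_trans yax (leIl a x).
Qed.

Lemma dist_DM_join_sub_D_ideal I :
  D_ideal I -> (forall s, S s -> subsetA s I) -> subsetA J I.
Proof.
move=> [_ closedI] SI x Jx.
apply: (closedI (below_union S x)); last exact: dist_DM_join_dist_below.
by move=> y [_ [s Ss sy]]; apply: SI s Ss y sy.
Qed.

End DistributiveDMJoin.

Lemma BL_top_normal (t : A -> Prop) :
  is_glb D_ideal subsetA (fun _ => False) t -> normal_ideal t.
Proof.
move=> [_ [_ glbt]]; apply: normal_ideal_ext normal_setT _ => x.
by split=> // _; apply: (glbt _ (normal_D_ideal normal_setT)).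
Qed.

Lemma BL_meet_normal N M (m : A -> Prop) : normal_ideal N -> normal_ideal M ->
  is_meet D_ideal subsetA N M m -> normal_ideal m.
Proof.
move=> nN nM [_ [lbm glbm]]; have nNM := normal_setI nN nM.
apply: (normal_ideal_ext nNM) => x; split.
- by apply: (glbm _ (normal_D_ideal nNM)) => z [->|->] y [].
- move=> mx; split.
  + exact: lbm _ (or_introl erefl) x mx.
  + exact: lbm _ (or_intror erefl) x mx.
Qed.

Lemma BL_lub_normal S J (j : A -> Prop) :
  dist_join normal_ideal subsetA S J ->
  is_lub D_ideal subsetA S j -> normal_ideal j.
Proof.
move=> distJ [Dj [ubj lej]]; have [[nJ [ubJ _]] _] := distJ.
have Jj := dist_DM_join_sub_D_ideal distJ Dj ubj.
have jJ := lej _ (normal_D_ideal nJ) ubJ.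
by apply: (normal_ideal_ext nJ) => x; split=> [/Jj | /jJ].
Qed.

Lemma DM_sub_kappa_frame_BL K :
  DM_dist_kappa_joins K -> sub_kappa_frame_BL K (@normal_ideal d A).
Proof.
move=> distDM; split; first exact: normal_D_ideal.
split; first exact: BL_top_normal.
split; first exact: BL_meet_normal.
move=> S nS kS j; exact: BL_lub_normal (distDM S nS kS _ (DM_lub nS)).
Qed.

Lemma dist_DM_join_of_normal_BL_join S (j : A -> Prop) :
  (forall s, S s -> normal_ideal s) -> normal_ideal (BL_join S) ->
  is_lub normal_ideal subsetA S j -> dist_join normal_ideal subsetA S j.
Proof.
move=> nS nJ lubj; have [_ [ubj lej]] := lubj.
have j_BL : subsetA j (BL_join S) := lej _ nJ (BL_join_lub S).2.1.
split=> // a m na [nm [lbm glbm]]; split=> //; split.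
  move=> Z [s Ss [nZ [lbZ _]]]; apply: glbm nZ _ => w [->|->].
    exact: lbZ _ (or_introl erefl).
  by move=> x Zx; apply: ubj s Ss x (lbZ s (or_intror erefl) x Zx).
move=> Y nY ubY x mx.
pose R := fun w => forall y, a y -> Y (y `&` w).
have SR s : S s -> subsetA s R.
  move=> Ss x' sx' y ay; apply: ubY (ex_intro2 _ _ s Ss (DM_meet na (nS s Ss))) _ _.
  by split; [exact: na.1 _ _ (leIl _ _) ay | exact: (nS s Ss).1 _ _ (leIr _ _) sx'].
have Rx : R x.
  apply: (j_BL x (lbm _ (or_intror erefl) x mx) R) => //.
  exact: D_ideal_residual (normal_D_ideal nY).
by rewrite -[x]meetxx; apply: Rx; apply: lbm _ (or_introl erefl) x mx.
Qed.

Lemma DM_kappa_frame K :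
  DM_dist_kappa_joins K -> kappa_frame (@normal_ideal d A) subsetA K.
Proof.
move=> distDM; split; first by exists (fun _ => True); exact: DM_top.
split; first by move=> N M nN nM; eexists; exact: DM_meet.
by move=> S nS kS; eexists; apply: distDM nS kS _ (DM_lub nS).
Qed.

Lemma kappa_frame_DM_dist K :
  kappa_frame (@normal_ideal d A) subsetA K -> DM_dist_kappa_joins K.
Proof.
move=> [_ [_ joinsDM]] S nS kS j lubj; have [j' distj'] := joinsDM S nS kS.
by apply: dist_join_lub distj' lubj => N M P NM MP x /NM /MP.
Qed.

Lemma BL_kappa_DM_normal K N :
  DM_dist_kappa_joins K -> BL_kappa_DM K N -> normal_ideal N.
Proof. by move=> distDM; apply; [exact: DM_sub_kappa_frame_BL |]. Qed.

Lemma normal_BL_kappa_DM K N : normal_ideal N -> BL_kappa_DM K N.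
Proof. by move=> nN C _; apply. Qed.

Lemma BL_kappa_DM_BL_join K S :
  (forall s, S s -> normal_ideal s) -> lt_kappa K S -> BL_kappa_DM K (BL_join S).
Proof.
move=> nS kS C [_ [_ [_ joinsC]]] DMC.
by apply: joinsC (BL_join_lub S) => // s /nS; apply: DMC.
Qed.

Lemma DM_dist_of_BL_kappa_normal K :
  (forall N, BL_kappa_DM K N -> normal_ideal N) -> DM_dist_kappa_joins K.
Proof.
move=> BLnormal S nS kS j; apply: dist_DM_join_of_normal_BL_join => //.
by apply/BLnormal; apply: BL_kappa_DM_BL_join.
Qed.

End DedekindMacNeille.

Theorem theorem4p4 (d : Order.disp_t) (A : tMeetSemilatticeType d) (K : Type)
  (hK : regular_cardinal K) :
  let DM := @normal_ideal d A in
  let cond1 := forall S : (A -> Prop) -> Prop,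
      (forall s, S s -> DM s) -> lt_kappa K S ->
      forall j, is_lub DM subsetA S j -> dist_join DM subsetA S j in
  let cond2 := kappa_frame DM subsetA K in
  let cond3 := forall N : A -> Prop, BL_kappa_DM K N <-> DM N in
  (cond1 <-> cond2) /\ (cond2 <-> cond3).
Proof.
move=> DM cond1 cond2 cond3.
have c12 : cond1 -> cond2 := @DM_kappa_frame d A K.
have c21 : cond2 -> cond1 := @kappa_frame_DM_dist d A K.
have c13 : cond1 -> cond3.
  by move=> distDM N; split; [exact: BL_kappa_DM_normal | exact: normal_BL_kappa_DM].
have c31 : cond3 -> cond1.
  by move=> eqBL; apply: DM_dist_of_BL_kappa_normal => N /eqBL.
split; split.
- exact: c12.
- exact: c21.
- by move=> /c21 /c13.
- by move=> /c31 /c12.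
Qed.
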